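(* Let $\delta$ be a root of the quadratic polynomial $\mathsf{u}(\mathsf{z}+1)^2-(\mathsf{v}-1)(\mathsf{z}+1)-1$ in an algebraic closure of $\mathbb{K}=\mathbb{C}(\mathsf{u},\mathsf{v})$, and let $\mathbb{L}=\mathbb{K}(\delta)$. Put $\mathsf{q}:=\mathsf{u}(\delta+1)^2\in\mathbb{L}$. Then the assignment $R_i\mapsto T_i:=R_i+\delta E_iR_i$, $E_i\mapsto E_i$ ($1\le i\le n-1$) induces an isomorphism of $\mathbb{L}$-algebras between $\mathcal{E}_n(\mathsf{u},\mathsf{v})\otimes_{\mathbb{K}}\mathbb{L}$ and the one-parameter bt-algebra $\mathcal{E}_n(\mathsf{q})$ over $\mathbb{L}$; that is, the elements $T_i$ and $E_i$ satisfy all the defining relations of $\mathcal{E}_n(\mathsf{q})$, in particular $T_i^2=1+(\mathsf{q}-1)E_i+(\mathsf{q}-1)E_iT_i$, and they generate.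
   Context: Let $\mathsf{u},\mathsf{v}$ be commuting indeterminates and $\mathbb{K}=\mathbb{C}(\mathsf{u},\mathsf{v})$. The two-parameter bt-algebra $\mathcal{E}_n(\mathsf{u},\mathsf{v})$ is $\mathbb{K}$ for $n=1$, and for $n\ge 2$ the unital associative $\mathbb{K}$-algebra generated by $R_1,\dots,R_{n-1},E_1,\dots,E_{n-1}$ subject to: $E_iE_j=E_jE_i$ for all $i,j$; $E_i^2=E_i$; $E_iR_j=R_jE_i$ for $|i-j|>1$; $E_iR_i=R_iE_i$; $E_iR_jR_i=R_jR_iE_j$ for $|i-j|=1$; $E_iE_jR_i=E_jR_iE_j=R_iE_iE_j$ for $|i-j|=1$; $R_iR_j=R_jR_i$ for $|i-j|>1$; $R_iR_jR_i=R_jR_iR_j$ for $|i-j|=1$; and $R_i^2=1+(\mathsf{u}-1)E_i+(\mathsf{v}-1)E_iR_i$ for all $i$. For a field $F$ and $\mathsf{q}\in F$ (or an indeterminate), the one-parameter bt-algebra $\mathcal{E}_n(\mathsf{q})$ over $F$ is the unital $F$-algebra generated by $T_1,\dots,T_{n-1},E_1,\dots,E_{n-1}$ subject to the same relations with $R_i$ replaced by $T_i$, except that the quadratic relation is $T_i^2=1+(\mathsf{q}-1)E_i+(\mathsf{q}-1)E_iT_i$. *)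

From HB Require Import structures.
From mathcomp Require Import all_boot all_order all_algebra.
Set Implicit Arguments. Unset Strict Implicit. Unset Printing Implicit Defensive.
Import GRing.Theory.
Local Open Scope ring_scope.

(* Generators R_1..R_{n-1}, E_1..E_{n-1} are indexed by i : 'I_n.-1
   (i.e. paper index = val i + 1).  Distance |i - j| of indices: *)
Definition idist (m : nat) (i j : 'I_m) : nat := (maxn i j - minn i j)%N.

Definition bt_rels (L : fieldType) (A : algType L) (n : nat) (a b : L)
    (R E : 'I_n.-1 -> A) : Prop :=
  (forall i j, E i * E j = E j * E i) /\
      (forall i, E i * E i = E i) /\
      (forall i j, (1 < idist i j)%N -> E i * R j = R j * E i) /\
      (forall i, E i * R i = R i * E i) /\
      (forall i j, idist i j = 1%N -> E i * R j * R i = R j * R i * E j) /\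
      (forall i j, idist i j = 1%N ->
          E i * E j * R i = E j * R i * E j /\ E j * R i * E j = R i * E i * E j) /\
      (forall i j, (1 < idist i j)%N -> R i * R j = R j * R i) /\
      (forall i j, idist i j = 1%N -> R i * R j * R i = R j * R i * R j) /\
      (forall i, R i * R i = 1 + (a - 1) *: E i + (b - 1) *: (E i * R i)).

Definition two_param_rels (L : fieldType) (A : algType L) (n : nat) (u v : L)
    (R E : 'I_n.-1 -> A) : Prop := @bt_rels L A n u v R E.

Definition one_param_rels (L : fieldType) (A : algType L) (n : nat) (q : L)
    (T E : 'I_n.-1 -> A) : Prop := @bt_rels L A n q q T E.

Definition is_presented_by (L : fieldType) (n : nat)
    (rels : forall B : algType L, ('I_n.-1 -> B) -> ('I_n.-1 -> B) -> Prop)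
    (A : algType L) (R E : 'I_n.-1 -> A) : Prop :=
  rels A R E /\
  forall (B : algType L) (R' E' : 'I_n.-1 -> B), rels B R' E' ->
    exists f : {lrmorphism A -> B},
      [/\ (forall i, f (R i) = R' i), (forall i, f (E i) = E' i) &
          forall g : {lrmorphism A -> B},
            (forall i, g (R i) = R' i) -> (forall i, g (E i) = E' i) ->
            forall x, g x = f x].

From HB Require Import structures.
From mathcomp Require Import all_boot all_order all_algebra.
From mathcomp Require Import ring.
Set Implicit Arguments.
Unset Strict Implicit.
Unset Printing Implicit Defensive.
Import GRing.Theory.
Local Open Scope ring_scope.

(* For an idempotent e and an element x commuting with e, the "twist"
   x + d e x = (1 + d e) x multiplies x by a unit-like factor 1 + d e; these
   factors compose as (1 + c e)(1 + d e) = 1 + (c + d + cd) e.  The heart of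
   the file is [twist_bt_rels]: if generators (R_i, E_i) satisfy the bt-algebra
   relations with quadratic parameters (a, b), then T_i := R_i + d E_i R_i
   satisfy them with parameters (a (1+d)^2, 1 + (b-1)(1+d)).  The only
   delicate relations are the braid relation and the quadratic relation;
   the braid relation is reduced to the identity R_i E_j R_j R_i =
   R_j E_i R_i R_j, derived from the quadratic relation of R_i
   ([xfyx_yexy]).

   For the theorem, the root delta gives parameters (q, q) with
   q = u (delta+1)^2, so the presentation of E_n(q) yields f : E_n(q) -> A;
   twisting back with d' = -delta/(1+delta) returns to parameters (u, v) and
   yields g : A -> E_n(q).  Both composites fix the generators, hence are the
   identity by uniqueness in the presentations. *)

Section Twist.
Context {L : fieldType} {A : algType L}.

Definition twist (d : L) (e x : A) : A := x + d *: (e * x).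

Lemma twistE d e x : twist d e x = (1 + d *: e) * x.
Proof. by rewrite /twist mulrDl mul1r scalerAl. Qed.

Lemma twist0 e x : twist 0 e x = x.
Proof. by rewrite /twist scale0r addr0. Qed.

Lemma commrZ k (x y : A) : GRing.comm x y -> GRing.comm x (k *: y).
Proof. by rewrite /GRing.comm -scalerAr -scalerAl => ->. Qed.

Lemma comm_twist_factor d (e y : A) : GRing.comm y e -> GRing.comm y (1 + d *: e).
Proof. by move=> ye; apply: commrD; [exact: commr1 | exact: commrZ]. Qed.

Lemma comm_twist d (e x z : A) :
  GRing.comm z e -> GRing.comm z x -> GRing.comm z (twist d e x).
Proof. by move=> ze zx; rewrite twistE; apply: commrM => //; exact: comm_twist_factor. Qed.

Lemma comm_twist_twist d (e f x y : A) :
  GRing.comm e f -> GRing.comm e y -> GRing.comm x f -> GRing.comm x y ->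
  GRing.comm (twist d e x) (twist d f y).
Proof.
move=> ef ey xf xy; apply: comm_twist.
- apply: commr_sym; rewrite twistE; apply: commrM; last exact: commr_sym.
  by apply: comm_twist_factor; apply: commr_sym.
- apply: commr_sym; rewrite twistE; apply: commrM; last exact: commr_sym.
  by apply: comm_twist_factor.
Qed.

Lemma twist_factorM c d (e : A) : e * e = e ->
  (1 + c *: e) * (1 + d *: e) = 1 + (c + d + c * d) *: e.
Proof.
move=> ee; rewrite mulrDl mul1r mulrDr mulr1 -scalerAl -scalerAr ee scalerA.
by rewrite !scalerDl -!addrA (addrCA (d *: e)).
Qed.

(* Composing twists along an idempotent; with c + d + cd = 0 they are inverse. *)
Lemma twist_twist c d (e x : A) : e * e = e ->
  twist c e (twist d e x) = twist (c + d + c * d) e x.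
Proof. by move=> ee; rewrite !twistE mulrA twist_factorM. Qed.

End Twist.

Lemma twist_quadratic {L : fieldType} {A : algType L} (a b d : L) (e x : A) :
  e * e = e -> e * x = x * e ->
  x * x = 1 + (a - 1) *: e + (b - 1) *: (e * x) ->
  twist d e x * twist d e x =
    1 + (a * (1 + d) ^+ 2 - 1) *: e + ((b - 1) * (1 + d)) *: (e * twist d e x).
Proof.
move=> ee ex quad.
have px : (1 + d *: e) * x = x * (1 + d *: e).
  by apply: commr_sym; apply: comm_twist_factor; exact: commr_sym.
have e_xx : e * (x * x) = a *: e + (b - 1) *: (e * x).
  rewrite quad !mulrDr mulr1 -!scalerAr ee mulrA ee.
  by rewrite -{1}(scale1r e) -scalerDl [1 + _]addrC subrK.
have e_twist : e * twist d e x = (1 + d) *: (e * x).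
  by rewrite /twist mulrDr -scalerAr mulrA ee scalerDl scale1r.
rewrite e_twist twistE -mulrA (mulrA x) -px -mulrA mulrA twist_factorM //.
rewrite mulrDl mul1r -scalerAl e_xx quad scalerDr !scalerA -!addrA; congr (1 + _).
rewrite [X in _ + X = _]addrCA (addrA ((a - 1) *: e)) -!scalerDl.
congr (_ *: _ + _ *: _); ring.
Qed.

Section AdjacentPair.
Context {L : fieldType} {A : algType L}.

(* The bt-relations between the generators (x, e) = (R_i, E_i) and
   (y, f) = (R_j, E_j) of two adjacent indices i, j, in both orders. *)
Record adjacent (e f x y : A) : Prop := Adjacent {
  adj_idem_e : e * e = e;
  adj_idem_f : f * f = f;
  adj_comm_ef : e * f = f * e;
  adj_comm_ex : e * x = x * e;
  adj_comm_fy : f * y = y * f;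
  adj_e_yx : e * y * x = y * x * f;
  adj_f_xy : f * x * y = x * y * e;
  adj_ef_x : e * f * x = f * x * f;
  adj_f_x_f : f * x * f = x * e * f;
  adj_fe_y : f * e * y = e * y * e;
  adj_e_y_e : e * y * e = y * f * e;
  adj_braid : x * y * x = y * x * y }.

Lemma adjacent_sym e f x y : adjacent e f x y -> adjacent f e y x.
Proof. by case=> *; split=> //; apply: esym. Qed.

Variables e f x y : A.
Hypothesis adj : adjacent e f x y.

Let ee := adj_idem_e adj.
Let ef := adj_comm_ef adj.
Let ex := adj_comm_ex adj.
Let fy := adj_comm_fy adj.
Let e_yx := adj_e_yx adj.
Let f_xy := adj_f_xy adj.
Let ef_x := adj_ef_x adj.
Let f_x_f := adj_f_x_f adj.
Let fe_y := adj_fe_y adj.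
Let e_y_e := adj_e_y_e adj.
Let braid := adj_braid adj.

Lemma e_xyx : e * (x * y * x) = x * y * x * f.
Proof. by rewrite braid !mulrA e_yx -mulrA fy mulrA. Qed.

Lemma xyx_e : x * y * x * e = f * (x * y * x).
Proof. by rewrite braid -!mulrA (mulrA x y e) -f_xy !mulrA fy. Qed.

(* Both sides of [xfyx_yexy] are mapped to x y x e f by multiplication by e. *)
Lemma e_xfyx : e * (x * f * y * x) = x * y * x * (e * f).
Proof.
rewrite !mulrA ex -(mulrA x e f) ef.
have -> : x * (f * e) * y = x * (y * f * e) by rewrite -e_y_e -fe_y !mulrA.
rewrite !mulrA -(mulrA (x * y) f e) -ef !mulrA -(mulrA (x * y) e f).
by rewrite -(mulrA (x * y) (e * f) x) ef_x f_x_f !mulrA.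
Qed.

Lemma xfyx_e : x * f * y * x * e = x * y * x * (e * f).
Proof.
rewrite -(mulrA x f y) fy !mulrA -(mulrA _ x e) -ex -(mulrA _ f (e * x)).
by rewrite (mulrA f e x) -ef ef_x f_x_f !mulrA.
Qed.

Lemma e_yexy : e * (y * e * x * y) = x * y * x * (e * f).
Proof.
rewrite !mulrA -fe_y -(mulrA (f * e * y) x y) -(mulrA (f * e) y (x * y)) (mulrA y x y).
by rewrite -braid -(mulrA f e) e_xyx mulrA -xyx_e -mulrA.
Qed.

Variables (a b : L).
Hypothesis quad_x : x * x = 1 + (a - 1) *: e + (b - 1) *: (e * x).

(* f commutes with x^2, which lies in the span of 1, e and e x. *)
Lemma xx_f : x * x * f = f * (x * x).
Proof.
rewrite quad_x mulrDl mulrDr !mulrDl !mulrDr mul1r mulr1 -!scalerAl -!scalerAr ef.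
by congr (_ + _ + _ *: _); rewrite (mulrA f e x) -ef ef_x f_x_f -ex.
Qed.

Lemma x_xfyx : x * (x * f * y * x) = x * (y * e * x * y).
Proof.
rewrite !mulrA xx_f !mulrA -(mulrA (f * x * x) y x) -(mulrA (f * x) x (y * x)).
by rewrite (mulrA x y x) braid !mulrA f_xy.
Qed.

(* The key identity: the difference z of both sides satisfies e z = 0 and
   x z = 0; since x is invertible modulo e (quadratic relation), z = 0. *)
Lemma xfyx_yexy : x * f * y * x = y * e * x * y.
Proof.
apply/eqP; rewrite -subr_eq0; apply/eqP.
set z := _ - _.
have ez : e * z = 0 by rewrite /z mulrBr e_xfyx e_yexy subrr.
have xz : x * z = 0 by rewrite /z mulrBr x_xfyx subrr.
have left_inv : (x - (b - 1) *: e) * x = 1 + (a - 1) *: e.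
  by rewrite mulrBl -scalerAl quad_x addrK.
have : (1 + (a - 1) *: e) * z = 0 by rewrite -left_inv -mulrA xz mulr0.
by rewrite mulrDl mul1r -scalerAl ez scaler0 addr0.
Qed.

Variable d : L.
Local Notation p := (1 + d *: e).
Local Notation p' := (1 + d *: f).

Lemma comm_p_x : p * x = x * p.
Proof. by apply: commr_sym; apply: comm_twist_factor; apply: commr_sym. Qed.

Lemma conj_xyx : p * (x * y * x) = x * y * x * p'.
Proof. by rewrite mulrDl mulrDr mul1r mulr1 -scalerAl -scalerAr e_xyx. Qed.

Lemma conj2_xfyx :
  p * (x * f * y * x) * p = x * f * y * x + (d + d + d * d) *: (x * y * x * (e * f)).
Proof.
rewrite !mulrDl !mulrDr !mul1r !mulr1 -!scalerAl -!scalerAr !scalerA e_xfyx xfyx_e.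
rewrite -(mulrA (x * y * x)) -(mulrA e f e) -ef (mulrA e e f) ee -!addrA.
by rewrite !scalerDl addrA.
Qed.

Lemma twist_braid_expand :
  twist d e x * twist d f y * twist d e x =
  x * y * x * (p' * p) + d *: (x * f * y * x + (d + d + d * d) *: (x * y * x * (e * f))).
Proof.
have mid : x * p' * y * x = x * y * x + d *: (x * f * y * x).
  by rewrite mulrDr mulr1 -scalerAr !mulrDl -!scalerAl.
have -> : twist d e x * twist d f y * twist d e x = p * (x * p' * y * x) * p.
  by rewrite !twistE {2}comm_p_x !mulrA.
by rewrite mid (mulrDr p) -scalerAr (mulrDl _ _ p) -scalerAl conj2_xfyx conj_xyx !mulrA.
Qed.

Lemma comm_p_f : p * f = f * p.
Proof. by apply: commr_sym; apply: comm_twist_factor; apply: commr_sym. Qed.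

Lemma twist_E_RR : e * twist d f y * twist d e x = twist d f y * twist d e x * f.
Proof.
have e_p' : e * p' = p' * e by apply: comm_twist_factor.
rewrite !twistE comm_p_x.
transitivity (p' * (e * y * x) * p); first by rewrite !mulrA e_p'.
by rewrite e_yx !mulrA -(mulrA _ p f) comm_p_f !mulrA.
Qed.

Lemma twist_EE_R :
  e * f * twist d e x = f * twist d e x * f /\ f * twist d e x * f = twist d e x * e * f.
Proof.
have comm_p_e : p * e = e * p by apply: commr_sym; apply: comm_twist_factor.
have -> : e * f * twist d e x = p * (e * f * x).
  by rewrite twistE !mulrA -(mulrA e f p) -comm_p_f mulrA -comm_p_e.
have -> : f * twist d e x * f = p * (f * x * f) by rewrite twistE !mulrA -comm_p_f.
by rewrite ef_x f_x_f twistE !mulrA.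
Qed.

End AdjacentPair.

(* The twisted generators of an adjacent pair satisfy the braid relation:
   both expansions agree by [xfyx_yexy]. *)
Lemma twist_braid {L : fieldType} {A : algType L} (a b d : L) (e f x y : A) :
  adjacent e f x y -> x * x = 1 + (a - 1) *: e + (b - 1) *: (e * x) ->
  twist d e x * twist d f y * twist d e x = twist d f y * twist d e x * twist d f y.
Proof.
move=> adj quad_x; have adj' := adjacent_sym adj.
rewrite (twist_braid_expand adj d) (twist_braid_expand adj' d).
have comm_pp' : GRing.comm (1 + d *: f) (1 + d *: e).
  apply: comm_twist_factor; apply: commr_sym.
  by apply: comm_twist_factor; exact: adj_comm_ef adj.
by rewrite (xfyx_yexy adj quad_x) (adj_braid adj) (adj_comm_ef adj) comm_pp'.
Qed.

Lemma idistC m (i j : 'I_m) : idist i j = idist j i.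
Proof. by rewrite /idist maxnC minnC. Qed.

Section BtRelations.
Context {L : fieldType} {A : algType L} {n : nat}.
Variables (a b : L) (R E : 'I_n.-1 -> A).
Hypothesis rels : bt_rels a b R E.

Lemma bt_adjacent i j : idist i j = 1%N -> adjacent (E i) (E j) (R i) (R j).
Proof.
move=> hij; have [EE [Eidem [_ [ER [E_RR [E_ER [_ [braid _]]]]]]]] := rels.
have hji : idist j i = 1%N by rewrite idistC.
split; [exact: Eidem | exact: Eidem | exact: EE | exact: ER | exact: ER
  | exact: E_RR | exact: E_RR | exact: (E_ER i j hij).1 | exact: (E_ER i j hij).2
  | exact: (E_ER j i hji).1 | exact: (E_ER j i hji).2 | exact: braid].
Qed.

Lemma twist_bt_rels (a' b' d : L) :
  a' = a * (1 + d) ^+ 2 -> b' - 1 = (b - 1) * (1 + d) ->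
  bt_rels a' b' (fun i => twist d (E i) (R i)) E.
Proof.
move=> ha hb; have [EE [Eidem [ER_far [ER [_ [_ [RR_far [_ quad]]]]]]]] := rels.
have ER_far_sym i j : (1 < idist i j)%N -> GRing.comm (R i) (E j).
  by move=> hij; apply: commr_sym; apply: ER_far; rewrite idistC.
split; first exact: EE.
split; first exact: Eidem.
split; first by move=> i j hij; apply: comm_twist; [exact: EE | exact: ER_far].
split; first by move=> i; apply: comm_twist; [exact: commr_refl | exact: ER].
split; first by move=> i j hij; exact: twist_E_RR (bt_adjacent hij) d.
split; first by move=> i j hij; exact: twist_EE_R (bt_adjacent hij) d.
split; first by move=> i j hij; apply: comm_twist_twist;
  [exact: EE | exact: ER_far | exact: ER_far_sym | exact: RR_far].
split; first by move=> i j hij; exact: (twist_braid d (bt_adjacent hij) (quad i)).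
by move=> i; rewrite ha hb; exact: twist_quadratic.
Qed.

End BtRelations.

Lemma twist_lrmorph {L : fieldType} {A B : algType L} (g : {lrmorphism A -> B}) d e x :
  g (twist d e x) = twist d (g e) (g x).
Proof. by rewrite /twist linearD linearZ rmorphM. Qed.

Lemma presented_endo_id {L : fieldType} {n : nat}
    (rels : forall B : algType L, ('I_n.-1 -> B) -> ('I_n.-1 -> B) -> Prop)
    (A : algType L) (R E : 'I_n.-1 -> A) :
  is_presented_by rels R E ->
  forall g : {lrmorphism A -> A},
    (forall i, g (R i) = R i) -> (forall i, g (E i) = E i) -> forall x, g x = x.
Proof.
move=> [relsA univ] g gR gE x; have [h [_ _ uniq_h]] := univ A R E relsA.
by rewrite (uniq_h g) // -(uniq_h idfun).
Qed.

Theorem proposition1 (L : fieldType) (u v delta : L) (n : nat) :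
  (0 < n)%N ->
  u * (delta + 1) ^+ 2 - (v - 1) * (delta + 1) - 1 = 0 ->
  forall (A : algType L) (R E : 'I_n.-1 -> A),
    is_presented_by (fun B => @two_param_rels L B n u v) R E ->
  forall (B : algType L) (T E' : 'I_n.-1 -> B),
    is_presented_by (fun B => @one_param_rels L B n (u * (delta + 1) ^+ 2)) T E' ->
  @one_param_rels L A n (u * (delta + 1) ^+ 2) (fun i => R i + delta *: (E i * R i)) E /\
  exists f : {lrmorphism B -> A},
    [/\ bijective f,
        (forall i, f (T i) = R i + delta *: (E i * R i)) &
        (forall i, f (E' i) = E i)].
Proof.
move=> _ hq A R E presA B T E' presB.
set q := u * (delta + 1) ^+ 2.
have nz : 1 + delta != 0.
  apply/eqP => d0; move: hq; rewrite (addrC delta 1) d0 expr0n /= !mulr0 subr0 sub0r.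
  by move=> /eqP; rewrite oppr_eq0 oner_eq0.
have hq' : q - 1 = (v - 1) * (1 + delta).
  by apply/eqP; rewrite -subr_eq0 -hq /q; apply/eqP; ring.
have relsT : one_param_rels q (fun i => twist delta (E i) (R i)) E.
  by apply: (twist_bt_rels presA.1); rewrite // /q addrC.
split; first exact: relsT.
have [f [fT fE _]] := presB.2 A _ _ relsT.
(* Twisting back with d' restores the relations of E_n(u, v), giving g. *)
pose d' := - delta / (1 + delta).
have inv_dd' : delta + d' + delta * d' = 0 by rewrite /d'; field.
have inv_d'd : d' + delta + d' * delta = 0 by rewrite -inv_dd'; ring.
have relsR : two_param_rels u v (fun i => twist d' (E' i) (T i)) E'.
  apply: (twist_bt_rels presB.1); first by rewrite /q /d'; field.
  by rewrite hq' /d'; field.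
have [g [gR gE _]] := presA.2 B _ _ relsR.
have idemE i : E i * E i = E i by have [_ [idem _]] := presA.1.
have idemE' i : E' i * E' i = E' i by have [_ [idem _]] := presB.1.
(* g and f are mutually inverse: the composites fix all generators. *)
exists f; split => //; exists g => x.
- apply: (presented_endo_id presB (g := g \o f)) => i /=; last by rewrite fE gE.
  by rewrite fT twist_lrmorph gR gE twist_twist // inv_dd' twist0.
- apply: (presented_endo_id presA (g := f \o g)) => i /=; last by rewrite gE fE.
  by rewrite gR twist_lrmorph fT fE twist_twist // inv_d'd twist0.
Qed.
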